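(* Let $\mathcal{H} = \mathbb{C}^2 \otimes \mathbb{C}^2$ with standard basis $e_1, e_2$ of $\mathbb{C}^2$, let $\mathfrak{N}_1 = \mathbb{B}(\mathbb{C}^2) \otimes I$ and $\mathfrak{N}_2 = I \otimes \mathbb{B}(\mathbb{C}^2)$, and let $$\Psi_2 = \tfrac{1}{2}\, e_1 \otimes e_1 + \tfrac{\sqrt{3}}{2}\, e_2 \otimes e_2 .$$ Then the vector state $\omega(X) = \langle \Psi_2, X\Psi_2\rangle$ on $\mathfrak{N}_1 \vee \mathfrak{N}_2 = \mathbb{B}(\mathcal{H})$ is not an EPR state for incommensurable pairs.
   Context: $[X,Y] = XY - YX$, $|X|^2 = X^*X$. For commuting self-adjoint operators $A_1, A_2$, a normal state $\omega$ is an EPR state for $(A_1, A_2)$ if $\omega((A_1 - A_2)^2) = 0$. A normal state $\omega$ of $\mathfrak{N}_1 \vee \mathfrak{N}_2$ (where $\mathfrak{N}_1 \subseteq \mathfrak{N}_2'$) is an EPR state for incommensurable pairs if there exist projections $E_1, F_1 \in \mathfrak{N}_1$ and $E_2, F_2 \in \mathfrak{N}_2$ such that $\omega$ is an EPR state for $(E_1,E_2)$ and for $(F_1,F_2)$, $\omega(|[E_1,F_1]|^2) \neq 0$, and $\omega(|[E_2,F_2]|^2) \neq 0$. *)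

From HB Require Import structures.
From mathcomp Require Import all_boot all_order all_algebra all_field.
Set Implicit Arguments. Unset Strict Implicit. Unset Printing Implicit Defensive.
Import Order.TTheory GRing.Theory Num.Theory.
Local Open Scope ring_scope.

Definition adj {m n : nat} (A : 'M[algC]_(m, n)) : 'M[algC]_(n, m) :=
  (map_mx Num.conj A)^T.

(* Kronecker product C^2 (x) C^2 = C^4, with e_a (x) e_b |-> basis index 2a+b *)
Definition kron (A B : 'M[algC]_2) : 'M[algC]_4 :=
  \matrix_(i < 4, j < 4)
     (A (inord (i %/ 2)) (inord (j %/ 2)) * B (inord (i %% 2)) (inord (j %% 2))).

Definition comm {n : nat} (X Y : 'M[algC]_n) : 'M[algC]_n := X *m Y - Y *m X.
Definition abs2 {n : nat} (X : 'M[algC]_n) : 'M[algC]_n := adj X *m X.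

Definition inN1 (X : 'M[algC]_4) : Prop := exists A : 'M[algC]_2, X = kron A 1%:M.
Definition inN2 (X : 'M[algC]_4) : Prop := exists B : 'M[algC]_2, X = kron 1%:M B.

Definition is_projection {n : nat} (P : 'M[algC]_n) : Prop :=
  P *m P = P /\ adj P = P.

Definition Psi2 : 'cV[algC]_4 :=
  \col_(i < 4) (if val i == 0%N then 2^-1
                else if val i == 3%N then sqrtC 3 / 2 else 0).

Definition vstate (Psi : 'cV[algC]_4) (X : 'M[algC]_4) : algC :=
  (adj Psi *m X *m Psi) ord0 ord0.

Definition EPR_pair (w : 'M[algC]_4 -> algC) (A1 A2 : 'M[algC]_4) : Prop :=
  w ((A1 - A2) *m (A1 - A2)) = 0.

Definition EPR_incommensurable (w : 'M[algC]_4 -> algC) : Prop :=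
  exists E1 F1 E2 F2 : 'M[algC]_4,
    [/\ inN1 E1 /\ is_projection E1, inN1 F1 /\ is_projection F1,
        inN2 E2 /\ is_projection E2, inN2 F2 /\ is_projection F2 &
    [/\ EPR_pair w E1 E2, EPR_pair w F1 F2,
        w (abs2 (comm E1 F1)) != 0 & w (abs2 (comm E2 F2)) != 0]].

(* For a self-adjoint X, omega(X^2) = <X Psi, X Psi> = |X Psi|^2,
   so an EPR pair (A (x) I, I (x) B) of self-adjoint operators satisfies
   (A (x) I - I (x) B) Psi2 = 0.  The coordinates of this vector along
   e1 (x) e2 and e2 (x) e1 give, with a = A_12 and c = B_21 (and using
   A_21 = conj a, B_12 = conj c), the system  a sqrt3 = c,
   conj a = (conj c) sqrt3, which forces a = 0 because sqrt3 is real and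
   sqrt3^2 <> 1.  Hence the A-factors of both pairs are diagonal, so E1 and
   F1 are diagonal matrices and commute; then |[E1, F1]|^2 = 0 and omega of
   it vanishes, a contradiction. *)
From mathcomp Require Import all_boot all_order all_algebra all_field.
From mathcomp Require Import ring.
Import GRing.Theory Num.Theory.
Local Open Scope ring_scope.

Lemma adjM m n p (A : 'M[algC]_(m, n)) (B : 'M[algC]_(n, p)) :
  adj (A *m B) = adj B *m adj A.
Proof. by rewrite /adj map_mxM trmx_mul. Qed.

Lemma adjB m n (A B : 'M[algC]_(m, n)) : adj (A - B) = adj A - adj B.
Proof. by rewrite /adj map_mxB linearB. Qed.

Lemma vstate_sq_norm (Psi : 'cV[algC]_4) (X : 'M[algC]_4) : adj X = X ->
  vstate Psi (X *m X) = \sum_k ((X *m Psi) k 0)^* * (X *m Psi) k 0.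
Proof.
move=> sa_X; rewrite /vstate -{1}sa_X mulmxA -adjM -mulmxA mxE.
by apply: eq_bigr => k _; rewrite !mxE.
Qed.

Lemma EPR_pair_annihilates {Psi : 'cV[algC]_4} {A1 A2 : 'M[algC]_4} :
  adj A1 = A1 -> adj A2 = A2 -> EPR_pair (vstate Psi) A1 A2 ->
  forall k, ((A1 - A2) *m Psi) k 0 = 0.
Proof.
move=> sa1 sa2; rewrite /EPR_pair vstate_sq_norm; last by rewrite adjB sa1 sa2.
set v := (A1 - A2) *m Psi => norm0 k.
have nneg i : true -> 0 <= (v i 0)^* * v i 0 by rewrite mulrC mul_conjC_ge0.
move: (psumr_eq0P nneg norm0 (i := k) isT) => /eqP.
by rewrite mulrC mul_conjC_eq0 => /eqP.
Qed.

Definition kron_index := (erefl : (0 %/ 2 = 0)%N, erefl : (1 %/ 2 = 0)%N,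
  erefl : (2 %/ 2 = 1)%N, erefl : (3 %/ 2 = 1)%N, erefl : (0 %% 2 = 0)%N,
  erefl : (1 %% 2 = 1)%N, erefl : (2 %% 2 = 0)%N, erefl : (3 %% 2 = 1)%N).

Lemma inord_neq01 : ((inord 1 == inord 0 :> 'I_2) = false) *
                    ((inord 0 == inord 1 :> 'I_2) = false).
Proof. by split; rewrite -val_eqE /= !inordK. Qed.

Lemma EPR_vector_e12 (A B : 'M[algC]_2) :
  ((kron A 1%:M - kron 1%:M B) *m Psi2) (inord 1) 0 =
  A (inord 0) (inord 1) * (sqrtC 3 / 2) - B (inord 1) (inord 0) / 2.
Proof.
rewrite mxE !big_ord_recr big_ord0 /= !mxE /= inordK //.
by rewrite ?kron_index ?inord_neq01 ?eqxx /=; ring.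
Qed.

Lemma EPR_vector_e21 (A B : 'M[algC]_2) :
  ((kron A 1%:M - kron 1%:M B) *m Psi2) (inord 2) 0 =
  A (inord 1) (inord 0) / 2 - B (inord 0) (inord 1) * (sqrtC 3 / 2).
Proof.
rewrite mxE !big_ord_recr big_ord0 /= !mxE /= inordK //.
by rewrite ?kron_index ?inord_neq01 ?eqxx /=; ring.
Qed.

Lemma selfadj_kronl {A : 'M[algC]_2} : adj (kron A 1%:M) = kron A 1%:M ->
  A (inord 1) (inord 0) = (A (inord 0) (inord 1))^*.
Proof.
move/matrixP=> /(_ (inord 2) (inord 0)); rewrite !mxE /= !inordK //.
by rewrite ?kron_index ?inord_neq01 ?eqxx /= ?mulr1 => <-.
Qed.

Lemma selfadj_kronr {A : 'M[algC]_2} : adj (kron 1%:M A) = kron 1%:M A ->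
  A (inord 1) (inord 0) = (A (inord 0) (inord 1))^*.
Proof.
move/matrixP=> /(_ (inord 1) (inord 0)); rewrite !mxE /= !inordK //.
by rewrite ?kron_index ?inord_neq01 ?eqxx /= ?mul1r => <-.
Qed.

(* A linear system with a real coefficient s, s^2 <> 1, and its conjugate:
   a s = c and conj(a) = conj(c) s force a = 0 (conjugating the second
   equation gives a = c s, hence a = a s^2). *)
Lemma real_linear_system (s a c : algC) : s \is Num.real -> s ^+ 2 != 1 ->
  a * s = c -> a^* = c^* * s -> a = 0.
Proof.
move=> s_real s2_neq1 eq1 eq2.
have eq2' : a = c * s by rewrite -[a]conjCK eq2 rmorphM /= conjCK (CrealP s_real).
apply/eqP; move: s2_neq1; apply: contraNT => a_neq0.
by apply/eqP/(mulfI a_neq0); rewrite mulr1 {2}eq2' -eq1; ring.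
Qed.

Lemma sqrt3_real : sqrtC 3 \is @Num.real algC.
Proof. by rewrite realE sqrtC_ge0 ler0n. Qed.

Lemma sqrt3_sq_neq1 : sqrtC 3 ^+ 2 != 1 :> algC.
Proof. by rewrite sqrtCK (eqr_nat algC 3 1). Qed.

(* An EPR pair (A (x) I, I (x) B) of self-adjoint operators for Psi2 has a
   diagonal A: the two coordinates above vanish and form such a system. *)
Lemma EPR_pair_diagonal {A B : 'M[algC]_2} :
  adj (kron A 1%:M) = kron A 1%:M -> adj (kron 1%:M B) = kron 1%:M B ->
  EPR_pair (vstate Psi2) (kron A 1%:M) (kron 1%:M B) ->
  A (inord 0) (inord 1) = 0 /\ A (inord 1) (inord 0) = 0.
Proof.
move=> saA saB epr; have null := EPR_pair_annihilates saA saB epr.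
have := null (inord 2); have := null (inord 1).
rewrite EPR_vector_e12 EPR_vector_e21 (selfadj_kronl saA).
rewrite -[B (inord 0) (inord 1)]conjCK -(selfadj_kronr saB).
set a := A (inord 0) (inord 1); set c := B (inord 1) (inord 0).
have half_neq0 : (2 : algC)^-1 != 0 by rewrite invr_eq0 pnatr_eq0.
move=> /eqP; rewrite subr_eq0 => /eqP eq_e12.
move=> /eqP; rewrite subr_eq0 => /eqP eq_e21.
have a0 : a = 0.
  apply: (@real_linear_system _ a c sqrt3_real sqrt3_sq_neq1).
  - by apply: (mulIf half_neq0); rewrite -mulrA.
  - by apply: (mulIf half_neq0); rewrite eq_e21 mulrA.
by rewrite a0 rmorph0.
Qed.

Lemma kron_diag {A : 'M[algC]_2} :
  A (inord 0) (inord 1) = 0 -> A (inord 1) (inord 0) = 0 ->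
  kron A 1%:M = diag_mx (\row_(i < 4) A (inord (i %/ 2)) (inord (i %/ 2))).
Proof.
move=> a01 a10; apply/matrixP => i j; rewrite !mxE.
case: i => [[|[|[|[|i]]]] ?] //; case: j => [[|[|[|[|j]]]] ?] //=;
  rewrite ?kron_index ?inord_neq01 ?eqxx ?a01 ?a10 /=;
  by rewrite ?mulr1 ?mulr0 ?mul0r ?mulr0n ?mulr1n.
Qed.

Theorem mainTheorem4 : ~ EPR_incommensurable (vstate Psi2).
Proof.
move=> [E1 [F1 [E2 [F2 [[[A ->] [_ saE1]] [[A' ->] [_ saF1]]
  [[B ->] [_ saE2]] [[B' ->] [_ saF2]] [eprE eprF noncommE _]]]]]].
have [a01 a10] := EPR_pair_diagonal saE1 saE2 eprE.
have [a'01 a'10] := EPR_pair_diagonal saF1 saF2 eprF.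
have commE1F1 : comm (kron A 1%:M) (kron A' 1%:M) = 0.
  by rewrite /comm (kron_diag a01 a10) (kron_diag a'01 a'10) diag_mxC subrr.
by move: noncommE; rewrite commE1F1 /abs2 mulmx0 /vstate mulmx0 mul0mx mxE eqxx.
Qed.
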